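(* Let $1/n\ll \nu\ll \lambda\ll 1$. Let $K_{2n+1}$ be 2-factorized. Suppose that $X,V\subseteq V(K_{2n+1})$ are disjoint, $(X,V)$ is $(10\nu n)$-replete and $|X|\leq \lambda n$. Suppose that $C\subseteq C(K_{2n+1})$ is such that every vertex $v\in V(K_{2n+1})$ has at least $3\lambda n$ neighbours in $V$ joined to $v$ by edges with colour in $C$. Then, for any set $C'\subseteq C(K_{2n+1})$ of at most $\nu n$ colours, there is a perfect $(C'\cup C)$-rainbow matching from $X$ to $V$ which uses every colour in $C'$.
   Context: A 2-factorization of $K_{2n+1}$ is an edge-colouring in which every vertex is incident to exactly 2 edges of each colour; $C(K_{2n+1})$ is its colour set. For disjoint $W,Y$, $(W,Y)$ is $\ell$-replete if for every colour at least $\ell$ edges of that colour join $W$ to $Y$. A perfect $D$-rainbow matching from $X$ to $V$ is a matching covering every vertex of $X$, each edge joining $X$ to $V$, with distinct colours all in $D$. $a\ll b$ means the statement holds whenever $a\le b^K/K$ for a suitable fixed absolute constant $K$ per relation; $1/n\ll\cdots$ entails $n$ large. *)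

From mathcomp Require Import all_boot all_order all_algebra.
Set Implicit Arguments. Unset Strict Implicit. Unset Printing Implicit Defensive.
Import Order.TTheory GRing.Theory Num.Theory.

(* Vertices of K_{2n+1} are 'I_(2n+1).  An edge-colouring with colour type Col
   is a symmetric function c : V -> V -> Col (its values on the diagonal are
   irrelevant: loops are not edges). *)
Notation vert n := 'I_(n.*2.+1).

Definition edge_colouring (n : nat) (Col : finType) (c : vert n -> vert n -> Col) :=
  forall u v, c u v = c v u.

(* 2-factorization: every vertex is incident to exactly 2 edges of each colour.
   The colour set C(K_{2n+1}) is then the whole type Col (every colour occurs). *)
Definition two_factorization (n : nat) (Col : finType) (c : vert n -> vert n -> Col) :=
  edge_colouring c /\
  forall (v : vert n) (col : Col), #|[set u | (u != v) && (c v u == col)]| = 2.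

Definition n_edges_between (n : nat) (Col : finType) (c : vert n -> vert n -> Col)
  (W Y : {set vert n}) (col : Col) : nat :=
  #|[set p : vert n * vert n | [&& p.1 \in W, p.2 \in Y & c p.1 p.2 == col]]|.

Definition replete (R : realFieldType) (n : nat) (Col : finType)
  (c : vert n -> vert n -> Col) (W Y : {set vert n}) (l : R) :=
  forall col : Col, (l <= (n_edges_between c W Y col)%:R)%R.

(* A perfect D-rainbow matching from X to V, given as the map f sending each
   x in X to its partner: edges {x, f x} (x in X) are pairwise disjoint, join
   X to V, and have distinct colours all in D. *)
Definition perfect_rainbow_matching (n : nat) (Col : finType)
  (c : vert n -> vert n -> Col) (D : {set Col}) (X V : {set vert n})
  (f : vert n -> vert n) :=
  [/\ forall x, x \in X -> f x \in V,
      {in X &, injective f},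
      {in X &, injective (fun x => c x (f x))} &
      forall x, x \in X -> c x (f x) \in D].

From mathcomp Require Import all_boot all_order all_algebra zify lra.
Import Order.TTheory GRing.Theory Num.Theory.
Set Implicit Arguments. Unset Strict Implicit.

(* A greedy argument suffices, so all three constants can be taken to be 1.
   In a 2-factorization every vertex lies on exactly two edges of each colour,
   so a partial rainbow matching S blocks at most 4|S| of the edges of a given
   colour between X and V (those meeting S or its partners).  As each colour of
   C' has at least 10 nu n >= 4|C'| such edges, the colours of C' can be matched
   one at a time.  Afterwards each unmatched x in X has at least 3 lambda n
   >= 3|X| C-neighbours in V, of which at most |S| are already matched and at
   most 2|S| see x in an already used colour, so x can be matched too. *)

Lemma card_le_mul_fibres (T U : finType) (A : {set T}) (B : {set U})
    (g : T -> U) k :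
  {in A, forall x, g x \in B} ->
  (forall y, #|[set x in A | g x == y]| <= k)%N -> (#|A| <= k * #|B|)%N.
Proof.
move=> gAB fibre_k; rewrite -sum1_card (partition_big g (mem B)) //=.
rewrite mulnC -sum_nat_const; apply: leq_sum => y _.
rewrite sum1_card; apply: leq_trans (fibre_k y).
by apply: subset_leq_card; apply/subsetP => x; rewrite !inE.
Qed.

Lemma exists_notin_card_lt (T : finType) (A B : {set T}) :
  (#|B| < #|A|)%N -> exists2 x, x \in A & x \notin B.
Proof.
move=> ltBA; apply/subsetPn; apply/negP => /subset_leq_card.
by rewrite leqNgt ltBA.
Qed.

Section RainbowMatching.
Variables (n : nat) (Col : finType) (c : vert n -> vert n -> Col).
Variables (X V : {set vert n}) (D : {set Col}).
Hypothesis c_2fact : two_factorization c.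
Hypothesis disjoint_XV : [disjoint X & V].

Definition partial_rainbow_matching (S : {set vert n}) (f : vert n -> vert n) :=
  [/\ S \subset X, {in S, forall x, f x \in V}, {in S &, injective f},
      {in S &, injective (fun x => c x (f x))} &
      {in S, forall x, c x (f x) \in D}].

Definition matching_colours (S : {set vert n}) (f : vert n -> vert n) :=
  [set c x (f x) | x in S].

Definition colour_edges (col : Col) :=
  [set p : vert n * vert n | [&& p.1 \in X, p.2 \in V & c p.1 p.2 == col]].

Definition coloured_nbrs (x : vert n) (C : {set Col}) :=
  [set u in V | (u != x) && (c x u \in C)].

Lemma colour_sym u v : c u v = c v u.
Proof. by case: c_2fact => sym _; apply: sym. Qed.

Lemma card_colour_nbrs x col : #|[set u | (u != x) && (c x u == col)]| = 2.
Proof. by case: c_2fact => _; apply. Qed.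

Lemma card_nbrs_colour_in x (U : {set Col}) :
  (#|[set u | (u != x) && (c x u \in U)]| <= 2 * #|U|)%N.
Proof.
apply: (@card_le_mul_fibres _ _ _ _ (c x)) => [u|col].
  by rewrite inE => /andP[].
rewrite -(card_colour_nbrs x col); apply: subset_leq_card; apply/subsetP => u.
by rewrite !inE => /andP[/andP[-> _] ->].
Qed.

Lemma card_colour_edges_fst col y :
  (#|[set p in colour_edges col | p.1 == y]| <= 2)%N.
Proof.
rewrite -(card_colour_nbrs y col) -(@card_in_imset _ _ snd); last first.
  by move=> [a b] [a' b']; rewrite !inE /= => /andP[_ /eqP->] /andP[_ /eqP->] /= ->.
apply: subset_leq_card; apply/subsetP => _ /imsetP[[a b] + ->].
rewrite !inE /= => /andP[/and3P[aX bV /eqP <-] /eqP <-].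
by rewrite eqxx andbT; apply: contraTneq bV => ->; rewrite (disjointFr disjoint_XV).
Qed.

Lemma card_colour_edges_snd col y :
  (#|[set p in colour_edges col | p.2 == y]| <= 2)%N.
Proof.
rewrite -(card_colour_nbrs y col) -(@card_in_imset _ _ fst); last first.
  by move=> [a b] [a' b']; rewrite !inE /= => /andP[_ /eqP->] /andP[_ /eqP->] /= ->.
apply: subset_leq_card; apply/subsetP => _ /imsetP[[a b] + ->].
rewrite !inE /= => /andP[/and3P[aX bV /eqP <-] /eqP <-].
rewrite colour_sym eqxx andbT; apply: contraTneq bV => <-.
by rewrite (disjointFr disjoint_XV).
Qed.

Lemma exists_colour_edge_avoiding col (S T : {set vert n}) :
  (2 * #|S| + 2 * #|T| < n_edges_between c X V col)%N ->
  exists2 p, p \in colour_edges col & (p.1 \notin S) && (p.2 \notin T).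
Proof.
set A1 := [set p in colour_edges col | p.1 \in S].
set A2 := [set p in colour_edges col | p.2 \in T].
have cardA1 : (#|A1| <= 2 * #|S|)%N.
  apply: (@card_le_mul_fibres _ _ _ _ fst) => [p|y]; first by rewrite inE => /andP[].
  apply: leq_trans (card_colour_edges_fst col y); apply: subset_leq_card.
  by apply/subsetP => p; rewrite !inE => /andP[/andP[-> _] ->].
have cardA2 : (#|A2| <= 2 * #|T|)%N.
  apply: (@card_le_mul_fibres _ _ _ _ snd) => [p|y]; first by rewrite inE => /andP[].
  apply: leq_trans (card_colour_edges_snd col y); apply: subset_leq_card.
  by apply/subsetP => p; rewrite !inE => /andP[/andP[-> _] ->].
move=> lt_edges; have [p p_col] : exists2 p, p \in colour_edges col & p \notin A1 :|: A2.
  apply: exists_notin_card_lt; apply: leq_ltn_trans (leq_card_setU A1 A2) _.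
  exact: leq_ltn_trans (leq_add cardA1 cardA2) lt_edges.
by move: (p_col); rewrite !inE => -> /=; rewrite negb_or; exists p.
Qed.

Lemma exists_nbr_avoiding x C (T : {set vert n}) (U : {set Col}) :
  (#|T| + 2 * #|U| < #|coloured_nbrs x C|)%N ->
  exists2 u, u \in coloured_nbrs x C & (u \notin T) && (c x u \notin U).
Proof.
move=> lt_nbrs; set B := T :|: [set u | (u != x) && (c x u \in U)].
have [u u_nbr uB] : exists2 u, u \in coloured_nbrs x C & u \notin B.
  apply: exists_notin_card_lt; apply: leq_ltn_trans (leq_card_setU _ _) _.
  exact: leq_ltn_trans (leq_add (leqnn _) (card_nbrs_colour_in x U)) lt_nbrs.
exists u => //; move: u_nbr uB; rewrite !inE negb_or.
by case/and3P=> _ -> _ /andP[-> ->].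
Qed.

Lemma partial_matching_extend S f x u :
  partial_rainbow_matching S f -> x \in X -> x \notin S -> u \in V ->
  u \notin f @: S -> c x u \in D -> c x u \notin matching_colours S f ->
  partial_rainbow_matching (x |: S) [eta f with x |-> u] /\
  matching_colours (x |: S) [eta f with x |-> u] = c x u |: matching_colours S f.
Proof.
case=> sSX fV f_inj col_inj colD xX xS uV u_new xuD col_new.
have fE : {in S, forall y, (if y == x then u else f y) = f y}.
  by move=> y yS; case: eqP => // yx; rewrite -yx yS in xS.
have f_old y : y \in S -> f y \in f @: S by apply: imset_f.
have col_old y : y \in S -> c y (f y) \in matching_colours S f.
  exact: (imset_f (fun y => c y (f y))).
split; last first.
  rewrite /matching_colours imsetU1 /= eqxx; congr (_ |: _).
  by apply: eq_in_imset => y yS /=; rewrite fE.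
split => /=.
- by rewrite subUset sub1set xX.
- by move=> y /setU1P[-> | yS]; rewrite ?eqxx ?fE ?fV.
- move=> y z /setU1P[-> | yS] /setU1P[-> | zS] //; rewrite ?eqxx ?fE //.
  + by move=> uf; rewrite uf f_old in u_new.
  + by move=> fu; rewrite -fu f_old in u_new.
  + exact: f_inj.
- move=> y z /setU1P[-> | yS] /setU1P[-> | zS] //; rewrite ?eqxx ?fE //.
  + by move=> cf; rewrite cf col_old in col_new.
  + by move=> fc; rewrite -fc col_old in col_new.
  + exact: col_inj.
- by move=> y /setU1P[-> | yS]; rewrite ?eqxx ?fE ?colD.
Qed.

Lemma partial_matching0 f : partial_rainbow_matching set0 f.
Proof. by split; rewrite ?sub0set // => x; rewrite inE. Qed.

Lemma card_matching_colours S f :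
  partial_rainbow_matching S f -> #|matching_colours S f| = #|S|.
Proof. by case=> _ _ _ col_inj _; apply: card_in_imset. Qed.

Lemma partial_matching_perfect f :
  partial_rainbow_matching X f -> perfect_rainbow_matching c D X V f.
Proof. by case. Qed.

Lemma partial_matching_of_colours (C' : {set Col}) :
  C' \subset D ->
  (forall col, col \in C' -> 4 * #|C'| <= n_edges_between c X V col)%N ->
  exists S f, partial_rainbow_matching S f /\ matching_colours S f = C'.
Proof.
move=> sC'D many_edges.
suff /(_ _ C' (subxx _) erefl) : forall m (E : {set Col}), E \subset C' ->
    #|E| = m -> exists S f, partial_rainbow_matching S f /\ matching_colours S f = E.
  by [].
elim=> [|m IH] E sEC' cardE.
  by exists set0, id; rewrite /matching_colours imset0 (cards0_eq cardE);
    split; first exact: partial_matching0.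
have [col colE] : exists col, col \in E by apply/set0Pn; rewrite -card_gt0 cardE.
have cardE' : #|E :\ col| = m by move: cardE; rewrite (cardsD1 col) colE => -[].
have [S [f [Sf colSf]]] := IH _ (subset_trans (subD1set _ _) sEC') cardE'.
have colC' : col \in C' := subsetP sEC' _ colE.
have ltSC' : (#|S| < #|C'|)%N.
  by rewrite -(card_matching_colours Sf) colSf cardE' -cardE subset_leq_card.
have few_blocked : (2 * #|S| + 2 * #|f @: S| < n_edges_between c X V col)%N.
  have : (#|f @: S| <= #|S|)%N := leq_imset_card f S.
  by have := many_edges _ colC'; lia.
have [[x u]] := exists_colour_edge_avoiding few_blocked.
rewrite inE /= => /and3P[xX uV /eqP xu_col] /andP[xS uT].
have [||Sf' colSf'] := partial_matching_extend Sf xX xS uV uT.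
- by rewrite xu_col (subsetP sC'D).
- by rewrite xu_col colSf setD11.
by exists (x |: S), [eta f with x |-> u]; rewrite colSf' xu_col colSf setD1K.
Qed.

Lemma partial_matching_saturate (C : {set Col}) S f :
  C \subset D ->
  (forall x, x \in X -> 3 * #|X| <= #|coloured_nbrs x C|)%N ->
  partial_rainbow_matching S f ->
  exists g, partial_rainbow_matching X g /\
    matching_colours S f \subset matching_colours X g.
Proof.
move=> sCD many_nbrs; move: {2}#|X :\: S| (erefl #|X :\: S|) => k.
elim: k S f => [|k IH] S f cardXS Sf; have [sSX _ _ _ _] := Sf.
  suff eSX : S = X by exists f; rewrite -eSX; split.
  by apply/eqP; rewrite eqEsubset sSX -setD_eq0 -cards_eq0 cardXS.
have [x xXS] : exists x, x \in X :\: S by apply/set0Pn; rewrite -card_gt0 cardXS.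
have [xX xS] := setDP xXS.
have ltSX : (#|S| < #|X|)%N.
  by apply: proper_card; apply/properP; split => //; exists x.
have few_blocked :
    (#|f @: S| + 2 * #|matching_colours S f| < #|coloured_nbrs x C|)%N.
  rewrite (card_matching_colours Sf).
  have : (#|f @: S| <= #|S|)%N := leq_imset_card f S.
  by have := many_nbrs _ xX; lia.
have [u] := exists_nbr_avoiding few_blocked.
rewrite inE => /andP[uV /andP[_ xuC]] /andP[uT xu_new].
have [Sf' colSf'] := partial_matching_extend Sf xX xS uV uT (subsetP sCD _ xuC) xu_new.
have [|g [Xg colSg]] := IH _ _ _ Sf'.
  by rewrite setUC -setDDl; move: cardXS; rewrite (cardsD1 x) xXS => -[].
by exists g; split; rewrite // (subset_trans _ colSg) // colSf' subsetUr.
Qed.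

End RainbowMatching.

Local Open Scope ring_scope.

Theorem lemma4p4 (R : realFieldType) :
  exists K1 K2 K3 : nat, [/\ (0 < K1)%N, (0 < K2)%N, (0 < K3)%N &
  forall (nu lam : R) (n : nat),
    0 < nu -> 0 < lam -> (0 < n)%N ->
    lam <= K3%:R^-1 ->
    nu <= lam ^+ K2 / K2%:R ->
    (n%:R)^-1 <= nu ^+ K1 / K1%:R ->
    forall (Col : finType) (c : vert n -> vert n -> Col),
    two_factorization c ->
    forall (X V : {set vert n}),
    [disjoint X & V] ->
    replete c X V (10 * nu * n%:R) ->
    #|X|%:R <= lam * n%:R ->
    forall C : {set Col},
    (forall v : vert n,
        3 * lam * n%:R <= #|[set u in V | (u != v) && (c v u \in C)]|%:R) ->
    forall C' : {set Col}, #|C'|%:R <= nu * n%:R ->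
    exists f : vert n -> vert n,
      perfect_rainbow_matching c (C' :|: C) X V f /\
      forall col, col \in C' -> exists2 x, x \in X & c x (f x) = col].
Proof.
exists 1%N, 1%N, 1%N; split => // nu lam n nu_gt0 _ _ _ _ _ Col c c_2fact
  X V disjoint_XV X_replete cardX C C_dense C' cardC'.
have nun_ge0 : 0 <= nu * n%:R := mulr_ge0 (ltW nu_gt0) (ler0n _ _).
have many_edges col : col \in C' -> (4 * #|C'| <= n_edges_between c X V col)%N.
  by move=> _; rewrite -(ler_nat R) natrM; have := X_replete col; rewrite -mulrA; lra.
have many_nbrs x : x \in X -> (3 * #|X| <= #|coloured_nbrs c V x C|)%N.
  by move=> _; rewrite -(ler_nat R) natrM; have := C_dense x; rewrite -mulrA; lra.
have [S [f [Sf colSf]]] := partial_matching_of_colours c_2fact disjoint_XV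
  (subsetUl C' C) many_edges.
have [g [Xg colSg]] := partial_matching_saturate c_2fact disjoint_XV
  (subsetUr C' C) many_nbrs Sf.
exists g; split; first exact: partial_matching_perfect.
by move=> col; rewrite -colSf => /(subsetP colSg) /imsetP[x xX ->]; exists x.
Qed.
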